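(* Let $I$ and $J$ be finite index sets, let $X=\{x_i\}_{i\in I}$ be a finite set of player types and $Y=\{y_j\}_{j\in J}$ a finite set of strategies. Let $\mu=\{\mu_i\}_{i\in I}$ with $\mu_i\ge 0$ and $\sum_{i\in I}\mu_i=1$ be the given distribution of types. Let $c=\{c_{ij}\}\in\mathbb{R}^{I\times J}$, let each $f_j:\mathbb{R}_+\to\mathbb{R}$ ($j\in J$) be nondecreasing and continuous with primitive $F_j(t)=\int_0^t f_j(s)\,ds$, and let $\phi=\{\phi_{kj}\}\in\mathbb{R}^{J\times J}$ be symmetric. For $\nu\in\mathcal{P}(Y):=\{\nu\in\mathbb{R}_+^J:\sum_{j\in J}\nu_j=1\}$ define the cost $$\Psi_{ij}[\nu]:=c_{ij}+f_j(\nu_j)+\sum_{k\in J}\phi_{kj}\nu_k,$$ the set of transport plans $$\Pi(\mu,\nu):=\Big\{\gamma\in\mathbb{R}_+^{I\times J}:\ \sum_{j\in J}\gamma_{ij}=\mu_i\ \forall i\in I,\ \sum_{i\in I}\gamma_{ij}=\nu_j\ \forall j\in J\Big\},$$ the optimal transport value $\mathrm{MK}(\nu):=\inf_{\gamma\in\Pi(\mu,\nu)}\sum_{i,j}c_{ij}\gamma_{ij}$, and the energy $$E(\nu):=\sum_{j\in J}F_j(\nu_j)+\frac12\sum_{k,j\in J}\phi_{kj}\nu_k\nu_j.$$ Let $\nu$ be a minimizer of $\mathrm{MK}(\nu)+E(\nu)$ over $\nu\in\mathcal{P}(Y)$, and let $\gamma\in\Pi(\mu,\nu)$ satisfy $\sum_{i,j}c_{ij}\gamma_{ij}=\mathrm{MK}(\nu)$.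 Then $\gamma$ is a Cournot-Nash equilibrium, i.e. $\gamma\in\mathbb{R}_+^{I\times J}$, $\sum_{j\in J}\gamma_{ij}=\mu_i$ for all $i\in I$, and, with $\nu_j=\sum_{i\in I}\gamma_{ij}$, for all $(i,j)\in I\times J$, $$\gamma_{ij}>0\ \Longrightarrow\ \Psi_{ij}[\nu]=\min_{k\in J}\Psi_{ik}[\nu].$$ In particular, a Cournot-Nash equilibrium exists.
   Context: A Cournot-Nash equilibrium is a matrix $\gamma\in\mathbb{R}_+^{I\times J}$ ($\gamma_{ij}$ being the probability that a player of type $x_i$ chooses strategy $y_j$) whose first marginal is $\mu$ (i.e. $\sum_{j}\gamma_{ij}=\mu_i$ for all $i$) and such that, denoting by $\nu=\{\sum_i\gamma_{ij}\}_{j\in J}$ its second marginal, $\gamma_{ij}>0$ implies $\Psi_{ij}[\nu]=\min_{k\in J}\Psi_{ik}[\nu]$. *)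

From HB Require Import structures.
From mathcomp Require Import all_boot all_order all_algebra.
From mathcomp Require Import all_classical all_reals all_analysis.
Set Implicit Arguments. Unset Strict Implicit. Unset Printing Implicit Defensive.
Import Order.TTheory GRing.Theory Num.Theory numFieldNormedType.Exports.
Local Open Scope classical_set_scope.
Local Open Scope ring_scope.

Section CournotNash.
Variables (R : realType) (I J : finType).

Definition probvec (nu : J -> R) : Prop :=
  (forall j, 0 <= nu j) /\ \sum_(j : J) nu j = 1.

Definition plans (mu : I -> R) (nu : J -> R) : set (I -> J -> R) :=
  [set g | (forall i j, 0 <= g i j) /\
           (forall i, \sum_(j : J) g i j = mu i) /\
           (forall j, \sum_(i : I) g i j = nu j)].

Definition tcost (c : I -> J -> R) (g : I -> J -> R) : R :=
  \sum_(i : I) \sum_(j : J) c i j * g i j.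

Definition MK (mu : I -> R) (c : I -> J -> R) (nu : J -> R) : R :=
  inf [set tcost c g | g in plans mu nu].

Definition primitive (f : R -> R) (t : R) : R :=
  Rintegral lebesgue_measure `[0, t] f.

Definition energy (f : J -> R -> R) (phi : J -> J -> R) (nu : J -> R) : R :=
  \sum_(j : J) primitive (f j) (nu j)
  + 2^-1 * \sum_(k : J) \sum_(j : J) phi k j * nu k * nu j.

Definition Psi (c : I -> J -> R) (f : J -> R -> R) (phi : J -> J -> R)
  (nu : J -> R) (i : I) (j : J) : R :=
  c i j + f j (nu j) + \sum_(k : J) phi k j * nu k.

Definition marg2 (g : I -> J -> R) : J -> R := fun j => \sum_(i : I) g i j.

(* Cournot-Nash equilibrium; "Psi_ij = min_k Psi_ik" is written as
   Psi_ij <= Psi_ik for all k (the min over the finite J, attained at j). *)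
Definition CournotNash (mu : I -> R) (c : I -> J -> R) (f : J -> R -> R)
  (phi : J -> J -> R) (g : I -> J -> R) : Prop :=
  (forall i j, 0 <= g i j) /\
  (forall i, \sum_(j : J) g i j = mu i) /\
  (forall i j, 0 < g i j ->
     forall k, Psi c f phi (marg2 g) i j <= Psi c f phi (marg2 g) i k).

End CournotNash.

From HB Require Import structures.
From mathcomp Require Import all_boot all_order all_algebra.
From mathcomp Require Import all_classical all_reals all_analysis.
From mathcomp Require Import ring lra.
Import Order.TTheory GRing.Theory Num.Theory numFieldNormedType.Exports.
Local Open Scope classical_set_scope.
Local Open Scope ring_scope.

(* Both claims reduce to one variational fact: a plan g with first marginal mu
   minimizing G(g) = sum_ij c_ij g_ij + E(nu), nu the second marginal of g, is
   an equilibrium. If g_ij > 0 but Psi_ik[nu] < Psi_ij[nu], move a mass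
   e <= g_ij of type i from strategy j to strategy k. As f is nondecreasing,
   F_k grows by at most e f_k(nu_k + e) and F_j drops by at least
   e f_j(nu_j - e); as phi is symmetric, the quadratic part of E changes by
   e (sum_a phi_ak nu_a - sum_a phi_aj nu_a) + O(e^2). So G changes by at most
   e (Psi_ik[nu] - Psi_ij[nu] + o(1)), the o(1) coming from the continuity of
   f, which is negative for small e.
   A minimizer nu of MK + E together with an optimal plan g minimizes G, since
   MK(nu') <= cost(g') for every plan g' with marginals mu and nu'. For
   existence, the plans with first marginal mu form a compact set (Tychonoff)
   on which G is continuous, so G attains its minimum. *)

Lemma sumr_if_eq {R : nmodType} {T : finType} (t0 : T) (a : R) (F : T -> R) :
  \sum_t (if t == t0 then a else F t) = a + \sum_(t | t != t0) F t.
Proof.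
rewrite (bigD1 t0) //= eqxx; congr (_ + _).
by apply: eq_bigr => t /negPf ->.
Qed.

Lemma sumr_mul_delta {R : pzSemiRingType} {T : finType} (w : T -> R) t0 :
  \sum_t w t * (t == t0)%:R = w t0.
Proof.
by under eq_bigr do rewrite mulr_natr mulrb; rewrite -big_mkcond big_pred1_eq.
Qed.

Lemma ler_sum_term {R : numDomainType} {T : finType} (F : T -> R) t :
  (forall u, 0 <= F u) -> F t <= \sum_u F u.
Proof. by move=> F0; rewrite (bigD1 t) //= lerDl sumr_ge0. Qed.

Lemma continuous_sumr {K : realType} {T : topologicalType} {X : finType}
    (F : X -> T -> K) :
  (forall x, continuous (F x)) -> continuous (fun t => \sum_x F x t).
Proof.
move=> F_cont; apply: continuous_big => [|x _]; last exact: F_cont.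
exact: add_continuous.
Qed.

Section Primitive.
Context {R : realType} {f : R -> R}.
Hypothesis f_nondecr : {in `[0, +oo[ &, {homo f : s t / s <= t}}.
Hypothesis f_cont : {within [set x : R | 0 <= x], continuous f}.

Lemma integrable_primitive_segment b :
  lebesgue_measure.-integrable `[0, b] (EFin \o f).
Proof.
apply: continuous_compact_integrable; first exact: segment_compact.
by apply: continuous_subspaceW f_cont => x /=; rewrite in_itv /= => /andP[].
Qed.

Lemma primitive_le0 t : t <= 0 -> primitive f t = 0.
Proof.
rewrite /primitive le_eqVlt => /predU1P[->|t0].
  by rewrite set_itv1 Rintegral_set1.
by rewrite set_itv_ge ?Rintegral_set0 // bnd_simp -ltNge.
Qed.

Lemma primitive_increment_bounds s t : 0 <= s -> s <= t ->
  f s * (t - s) <= primitive f t - primitive f s <= f t * (t - s).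
Proof.
move=> s0 st.
have sub : `]s, t] `<=` `[0, t] by apply: subset_itvr; rewrite bnd_simp.
have int_st : lebesgue_measure.-integrable `]s, t] (EFin \o f).
  exact: integrableS (integrable_primitive_segment t).
have int_cst (k : R) : lebesgue_measure.-integrable `]s, t] (EFin \o (fun=> k)).
  have int0 : lebesgue_measure.-integrable `[0, t] (EFin \o (fun=> k)).
    apply: continuous_compact_integrable; first exact: segment_compact.
    exact/continuous_subspaceT/cst_continuous.
  exact: integrableS int0.
have len_st : fine (lebesgue_measure (`]s, t] : set R)) = t - s.
  rewrite lebesgue_measure_itv /= lte_fin.
  have [//|ts] := ltrP s t.
  by rewrite [t](@le_anti _ _ t s) ?ts ?st // subrr.
have int_cstE k : \int[lebesgue_measure]_(x in `]s, t]) k = k * (t - s).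
  by rewrite Rintegral_cst // len_st.
rewrite /primitive Rintegral_itvB ?bnd_simp //; last first.
  exact: integrable_primitive_segment.
have f_bounds x : x \in `]s, t] -> f s <= f x <= f t.
  rewrite in_itv /= => /andP[sx xt].
  by rewrite !f_nondecr ?in_itv /= ?andbT ?(le_trans s0) ?(ltW sx) ?(le_trans s0 st).
rewrite -!int_cstE; apply/andP; split; apply: le_Rintegral => // x xst.
  by have /andP[] := f_bounds x xst.
by have /andP[] := f_bounds x xst.
Qed.

Lemma continuous_primitive : continuous (primitive f).
Proof.
move=> x; pose b := `|x| + 1.
have b0 : 0 <= b by rewrite addr_ge0.
have cont_pos : {within `[0, b], continuous (primitive f)}.
  exact: parameterized_integral_continuous (integrable_primitive_segment b).
have cont_neg : {within `[- b, 0], continuous (primitive f)}.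
  apply: (@subspace_eq_continuous _ _ _ (cst 0)); last exact: cst_continuous.
  by move=> y /set_mem; rewrite /= in_itv /= => /andP[_ /primitive_le0].
have splitb : `[- b, b]%classic = `[- b, 0]%classic `|` `[0, b]%classic.
  apply/seteqP; split=> y /=; rewrite !in_itv /=.
    by move=> /andP[lb ub]; case: (leP y 0) => y0; [left|right]; rewrite ?lb ?ub ?ltW.
  by case=> /andP[y1 y2]; apply/andP; split; lra.
have : {within `[- b, b], continuous (primitive f)}.
  by rewrite splitb; apply: withinU_continuous => //; exact: interval_closed.
move=> /subspace_continuousP/(_ x); rewrite within_interior; first apply.
  by rewrite /= in_itv /= -ler_norml lerDl.
apply: filterS (@subset_itv_oo_cc _ _ (- b) b) _.
apply: open_nbhs_nbhs; split; first exact: interval_open.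
by rewrite /= in_itv /= -ltr_norml ltrDl.
Qed.
End Primitive.

Section OneSidedLimits.
Context {R : realType} {h : R -> R}.
Hypothesis h_cont : {within [set x : R | 0 <= x], continuous h}.

Lemma within_ge0_cvg_at_right x : 0 <= x -> h (x + e) @[e --> 0^'+] --> h x.
Proof.
move=> x0; apply/cvgrPdist_lt => r r0.
have /cvgrPdist_lt/(_ r r0) := (subspace_continuousP _ _).1 h_cont x x0.
rewrite near_withinE => /nbhs_ballP[d /= d0 hd].
near=> e; apply: hd; last by rewrite /= addr_ge0 // ltW.
by rewrite /ball /= opprD addNKr normrN gtr0_norm.
Unshelve. all: by end_near. Qed.

Lemma within_ge0_cvg_at_left x : 0 < x -> h (x - e) @[e --> 0^'+] --> h x.
Proof.
move=> x0; apply/cvgrPdist_lt => r r0.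
have /cvgrPdist_lt/(_ r r0) := (subspace_continuousP _ _).1 h_cont x (ltW x0).
rewrite near_withinE => /nbhs_ballP[d /= d0 hd].
near=> e; apply: hd.
  by rewrite /ball /= opprB addrC subrK gtr0_norm.
by rewrite /= subr_ge0 ltW.
Unshelve. all: by end_near. Qed.
End OneSidedLimits.

Section Transfer.
Context {R : comPzRingType} {J : finType}.
Variables (k j : J).

Definition transfer (e : R) (x : J -> R) : J -> R :=
  fun l => x l + e * ((l == k)%:R - (l == j)%:R).

Lemma sum_mul_transfer e x (w : J -> R) :
  \sum_l w l * transfer e x l = \sum_l w l * x l + e * (w k - w j).
Proof.
under eq_bigr do rewrite /transfer mulrDr mulrCA mulrBr.
by rewrite big_split /= -mulr_sumr sumrB !sumr_mul_delta.
Qed.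

Lemma sum_transfer e x : \sum_l transfer e x l = \sum_l x l.
Proof.
have := sum_mul_transfer e x (fun=> 1); rewrite subrr mulr0 addr0.
by under eq_bigr do rewrite mul1r; under [in RHS]eq_bigr do rewrite mul1r.
Qed.

Lemma sum_comp_transfer (h : J -> R -> R) e x : k != j ->
  \sum_l h l (transfer e x l) = \sum_l h l (x l)
    + (h k (x k + e) - h k (x k)) + (h j (x j - e) - h j (x j)).
Proof.
move=> kj; rewrite (bigD1 k) // (bigD1 j) 1?eq_sym //= [in RHS](bigD1 k) //.
rewrite [in RHS](bigD1 j) 1?eq_sym //=.
rewrite /transfer eqxx (negPf kj) eq_sym (negPf kj) eqxx.
under eq_bigr => l /andP[lk lj] do rewrite (negPf lk) (negPf lj) subrr mulr0 addr0.
rewrite subr0 mulr1 sub0r mulrN1; ring.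
Qed.

Definition interaction (phi : J -> J -> R) (x : J -> R) (l : J) : R :=
  \sum_a phi a l * x a.

Lemma quad_transfer (phi : J -> J -> R) e x :
  (forall a b, phi a b = phi b a) ->
  \sum_a \sum_b phi a b * transfer e x a * transfer e x b =
    \sum_a \sum_b phi a b * x a * x b
    + 2 * e * (interaction phi x k - interaction phi x j)
    + e ^+ 2 * (phi k k + phi j j - 2 * phi k j).
Proof.
move=> phi_sym.
pose W a := \sum_b phi a b * x b + e * (phi a k - phi a j).
have row a : \sum_b phi a b * transfer e x a * transfer e x b = W a * transfer e x a.
  rewrite /W -sum_mul_transfer mulr_suml; apply: eq_bigr => b _; ring.
have Wx : \sum_a W a * x a =
    \sum_a \sum_b phi a b * x a * x b + e * (interaction phi x k - interaction phi x j).
  rewrite /W /interaction; under eq_bigr do rewrite mulrDl.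
  rewrite big_split /= -sumrB mulr_sumr; congr (_ + _).
    by apply: eq_bigr => a _; rewrite mulr_suml; apply: eq_bigr => b _; ring.
  by apply: eq_bigr => a _; ring.
have Wkj : W k - W j = interaction phi x k - interaction phi x j
    + e * (phi k k + phi j j - 2 * phi k j).
  have sym l : \sum_b phi l b * x b = \sum_b phi b l * x b.
    by apply: eq_bigr => b _; rewrite phi_sym.
  rewrite /W /interaction !sym (phi_sym j k); ring.
rewrite (eq_bigr _ (fun a _ => row a)) sum_mul_transfer Wx Wkj; ring.
Qed.
End Transfer.

Section Variational.
Context {R : realType} {I J : finType}.
Variables (mu : I -> R) (c : I -> J -> R) (f : J -> R -> R) (phi : J -> J -> R).
Hypothesis f_nondecr : forall j, {in `[0, +oo[ &, {homo f j : s t / s <= t}}.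
Hypothesis f_cont : forall j, {within [set x : R | 0 <= x], continuous (f j)}.
Hypothesis phi_sym : forall k j, phi k j = phi j k.

Definition plans_fst : set (I -> J -> R) :=
  [set g | (forall i j, 0 <= g i j) /\ forall i, \sum_j g i j = mu i].

Definition plan_energy (g : I -> J -> R) : R :=
  tcost c g + energy f phi (marg2 g).

Definition transfer_row (i : I) (k j : J) (e : R) (g : I -> J -> R) :
    I -> J -> R :=
  fun i' => if i' == i then transfer k j e (g i) else g i'.

Definition transfer_rate (i : I) (k j : J) (nu : J -> R) (e : R) : R :=
  c i k + f k (nu k + e) + interaction phi nu k
  - (c i j + f j (nu j - e) + interaction phi nu j)
  + e * ((phi k k + phi j j) / 2 - phi k j).

Section TransferRow.
Context {i : I} {k j : J}.
Hypothesis kj : k != j.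

Lemma energy_transfer_le e nu :
  (forall l, 0 <= nu l) -> 0 <= e -> e <= nu j ->
  energy f phi (transfer k j e nu) <= energy f phi nu
    + e * (f k (nu k + e) + interaction phi nu k
           - (f j (nu j - e) + interaction phi nu j))
    + e ^+ 2 * ((phi k k + phi j j) / 2 - phi k j).
Proof.
move=> nu0 e0 enu.
have nuk_le : nu k <= nu k + e by rewrite lerDl.
have nuj_ge0 : 0 <= nu j - e by rewrite subr_ge0.
have nuj_le : nu j - e <= nu j by rewrite gerBl.
rewrite /energy (sum_comp_transfer _ _ (fun l => primitive (f l))) // quad_transfer //.
have /andP[_ Fk] :=
  primitive_increment_bounds (f_nondecr k) (f_cont k) _ _ (nu0 k) nuk_le.
have /andP[Fj _] :=
  primitive_increment_bounds (f_nondecr j) (f_cont j) _ _ nuj_ge0 nuj_le.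
lra.
Qed.

Lemma marg2_transfer_row e g :
  marg2 (transfer_row i k j e g) = transfer k j e (marg2 g).
Proof.
apply/funext => l; rewrite /marg2 /transfer_row.
rewrite (eq_bigr (fun i' => if i' == i then transfer k j e (g i) l else g i' l)).
  by rewrite sumr_if_eq /transfer [in RHS](bigD1 i) //=; ring.
by move=> i' _; case: eqP.
Qed.

Lemma tcost_transfer_row e g :
  tcost c (transfer_row i k j e g) = tcost c g + e * (c i k - c i j).
Proof.
rewrite /tcost /transfer_row.
rewrite (eq_bigr (fun i' => if i' == i
  then \sum_l c i l * transfer k j e (g i) l else \sum_l c i' l * g i' l)).
  by rewrite sumr_if_eq sum_mul_transfer [in RHS](bigD1 i) //=; ring.
by move=> i' _; case: eqP => [->|].
Qed.

Lemma plans_fst_transfer_row e g : plans_fst g -> 0 <= e -> e <= g i j ->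
  plans_fst (transfer_row i k j e g).
Proof.
move=> [g0 gmu] e0 eg; split=> [i' l|i']; rewrite /transfer_row.
  case: eqVneq => _ //; rewrite /transfer; have [->|lk] := eqVneq l k.
    by rewrite (negPf kj) subr0 mulr1 addr_ge0.
  have [->|lj] := eqVneq l j; first by rewrite sub0r mulrN1 subr_ge0.
  by rewrite subrr mulr0 addr0.
by case: eqVneq => [->|_]; rewrite ?sum_transfer.
Qed.

Lemma plan_energy_transfer_row_le e g :
  (forall i' l, 0 <= g i' l) -> 0 <= e -> e <= g i j ->
  plan_energy (transfer_row i k j e g)
    <= plan_energy g + e * transfer_rate i k j (marg2 g) e.
Proof.
move=> g0 e0 eg.
have nu0 l : 0 <= marg2 g l by apply: sumr_ge0 => i' _.
have enu : e <= marg2 g j.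
  by apply: le_trans eg (ler_sum_term (fun i' => g i' j) _ _) => i'.
rewrite /plan_energy tcost_transfer_row marg2_transfer_row.
have := energy_transfer_le _ _ nu0 e0 enu.
rewrite /transfer_rate; lra.
Qed.

Lemma transfer_rate_cvg nu : 0 <= nu k -> 0 < nu j ->
  transfer_rate i k j nu e @[e --> 0^'+]
    --> Psi c f phi nu i k - Psi c f phi nu i j.
Proof.
move=> nuk nuj; rewrite /transfer_rate /Psi -[X in _ --> X]addr0.
rewrite -[X in _ --> _ + X](mul0r ((phi k k + phi j j) / 2 - phi k j)).
apply: cvgD.
  apply: cvgB; (apply: cvgD; last exact: cvg_cst); apply: cvgD; try exact: cvg_cst.
    exact: within_ge0_cvg_at_right.
  exact: within_ge0_cvg_at_left.
apply: cvgM; last exact: cvg_cst.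
by apply: cvg_at_right_filter; exact: cvg_id.
Qed.
End TransferRow.

Lemma plan_energy_minimizer_CournotNash g : plans_fst g ->
  (forall g', plans_fst g' -> plan_energy g <= plan_energy g') ->
  CournotNash mu c f phi g.
Proof.
move=> [g0 gmu] gmin; split=> //; split=> // i j gij k.
have [->|kj] := eqVneq k j; first exact: lexx.
have nu0 l : 0 <= marg2 g l by apply: sumr_ge0.
have nuj : 0 < marg2 g j.
  by apply: lt_le_trans gij (ler_sum_term (fun i' => g i' j) _ _) => i'.
rewrite -subr_ge0; apply: (closed_cvg [set x : R | 0 <= x] _ _ _
  (transfer_rate_cvg (i:=i) _ (nu0 k) nuj)); first exact: closed_ge.
near=> e.
have e0 : 0 < e by near: e; exact: nbhs_right_gt.
have eg : e <= g i j by apply/ltW; near: e; exact: nbhs_right_lt.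
have := plan_energy_transfer_row_le kj _ _ g0 (ltW e0) eg.
have := gmin _ (plans_fst_transfer_row kj _ _ (conj g0 gmu) (ltW e0) eg).
rewrite /= -(pmulr_rge0 _ e0); lra.
Unshelve. all: by end_near. Qed.

Lemma continuous_energy (T : topologicalType) (m : T -> J -> R) :
  (forall l, continuous (fun t => m t l)) ->
  continuous (fun t => energy f phi (m t)).
Proof.
move=> m_cont t; apply: cvgD.
  apply: continuous_sumr => l x.
  exact: continuous_comp (m_cont l x) (continuous_primitive (f_cont l) _).
apply: cvgM; first exact: cvg_cst.
apply: continuous_sumr => a; apply: continuous_sumr => b x.
by apply: cvgM; [apply: cvgM; [exact: cvg_cst|]|]; exact: m_cont.
Qed.

Lemma continuous_plan_energy_comp (T : topologicalType) (m : T -> I -> J -> R) :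
  (forall i j, continuous (fun t => m t i j)) ->
  continuous (fun t => plan_energy (m t)).
Proof.
move=> m_cont t; apply: cvgD.
  apply: continuous_sumr => i; apply: continuous_sumr => j x.
  by apply: cvgM; [exact: cvg_cst|exact: m_cont].
by apply: continuous_energy => l; apply: continuous_sumr => i; exact: m_cont.
Qed.

Section Existence.
Import ArrowAsProduct.

Lemma continuous_coord i j : continuous (fun g : I -> J -> R => g i j).
Proof.
move=> g; exact: continuous_comp (@proj_continuous I (fun=> J -> R) i g)
  (@proj_continuous J (fun=> R) j (g i)).
Qed.

Lemma continuous_plan_energy : continuous plan_energy.
Proof. exact: continuous_plan_energy_comp continuous_coord. Qed.

Lemma compact_plans_fst : compact plans_fst.
Proof.
pose row_box i := [set h : J -> R | forall j, `[0, mu i]%classic (h j)].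
have box : compact [set g : I -> J -> R | forall i, row_box i (g i)].
  apply: (@tychonoff I (fun=> (J -> R : topologicalType)) row_box) => i.
  apply: (@tychonoff J (fun=> (R : topologicalType)) (fun=> `[0, mu i]%classic)).
  by move=> j; exact: segment_compact.
apply: subclosed_compact box _; last first.
  move=> g [g0 gmu] i j /=; rewrite in_itv /= g0 /= -gmu.
  exact: ler_sum_term.
have -> : plans_fst = \bigcap_i \bigcap_j [set g | 0 <= g i j]
    `&` \bigcap_i [set g | \sum_j g i j = mu i].
  apply/seteqP; split=> [g [g0 gmu]|g [g0 gmu]]; split=> [i|i] //=.
  - by move=> _ j _; exact: g0.
  - by move=> j; exact: g0 i Logic.I j Logic.I.
  - exact: gmu i Logic.I.
apply: closedI; apply: closed_bigI => i _; first apply: closed_bigI => j _.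
  apply: (@preimage_closed _ _ (fun g : I -> J -> R => g i j) [set x | 0 <= x]).
    by move=> g _; exact: continuous_coord.
  exact: closed_ge.
apply: (@preimage_closed _ _ (fun g : I -> J -> R => \sum_j g i j) [set x | x = mu i]).
  by move=> g _; apply: continuous_sumr => j; exact: continuous_coord.
exact: closed_eq.
Qed.

Lemma exists_plan_energy_minimizer : (forall i, 0 <= mu i) -> (0 < #|J|)%N ->
  exists2 g, plans_fst g &
    forall g', plans_fst g' -> plan_energy g <= plan_energy g'.
Proof.
move=> mu_ge0 /card_gt0P[j0 _].
have nonempty : plans_fst !=set0.
  exists (fun i l => mu i * (l == j0)%:R); split=> [i l|i]; first by rewrite mulr_ge0.
  exact: sumr_mul_delta.
have [g gP gmin] := compact_EVT_min nonempty compact_plans_fst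
  (continuous_subspaceT continuous_plan_energy).
by exists g => [|g' g'P]; [rewrite inE in gP|apply: gmin; rewrite inE].
Qed.
End Existence.
End Variational.

Section MongeKantorovich.
Context {R : realType} {I J : finType} {mu : I -> R}.
Variable c : I -> J -> R.

Lemma MK_le_tcost nu g : plans mu nu g -> MK mu c nu <= tcost c g.
Proof.
move=> gP; apply: ge_inf; last by exists g.
exists (- \sum_i \sum_j `|c i j| * mu i) => _ [g' [g'0 [g'mu _]] <-].
rewrite /tcost -sumrN; apply: ler_sum => i _; rewrite -sumrN; apply: ler_sum => j _.
have g'_le : g' i j <= mu i by rewrite -g'mu; exact: ler_sum_term.
have := lexx `|c i j * g' i j|; rewrite {1}ler_norml => /andP[+ _].
apply: le_trans; rewrite lerN2 normrM (ger0_norm (g'0 i j)).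
by rewrite ler_wpM2l.
Qed.

Lemma plans_marg2 {g : I -> J -> R} : plans_fst mu g -> plans mu (marg2 g) g.
Proof. by case. Qed.

Lemma probvec_marg2 {g : I -> J -> R} : \sum_i mu i = 1 ->
  plans_fst mu g -> probvec (marg2 g).
Proof.
move=> mu1 [g0 gmu]; split=> [j|]; first exact: sumr_ge0.
by rewrite /marg2 exchange_big /= -mu1; apply: eq_bigr => i _; exact: gmu.
Qed.
End MongeKantorovich.

Theorem mainTheorem1 (R : realType) (I J : finType)
  (mu : I -> R) (c : I -> J -> R) (f : J -> R -> R) (phi : J -> J -> R)
  (mu_ge0 : forall i, 0 <= mu i) (mu_sum : \sum_(i : I) mu i = 1)
  (f_nondecr : forall j, {in `[0, +oo[ &, {homo f j : s t / s <= t}})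
  (f_cont : forall j, {within [set x : R | 0 <= x], continuous (f j)})
  (phi_sym : forall k j, phi k j = phi j k) :
  (forall (nu : J -> R) (g : I -> J -> R),
     probvec nu ->
     (forall nu', probvec nu' ->
        MK mu c nu + energy f phi nu <= MK mu c nu' + energy f phi nu') ->
     plans mu nu g ->
     tcost c g = MK mu c nu ->
     CournotNash mu c f phi g)
  /\ ((0 < #|J|)%N -> exists g : I -> J -> R, CournotNash mu c f phi g).
Proof.
have minimizer_CN :=
  plan_energy_minimizer_CournotNash mu c _ _ f_nondecr f_cont phi_sym.
split=> [nu g _ nu_min [g0 [gmu gnu]] g_opt | J0].
  have nuE : marg2 g = nu by apply/funext => j; exact: gnu.
  apply: minimizer_CN => [|g' g'P]; first by split.
  rewrite /plan_energy nuE g_opt.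
  apply: le_trans (nu_min _ (probvec_marg2 mu_sum g'P)) _.
  by rewrite lerD2r; exact/MK_le_tcost/plans_marg2.
have [g gP gmin] := exists_plan_energy_minimizer _ c _ phi f_cont mu_ge0 J0.
by exists g; exact: minimizer_CN.
Qed.
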